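(* Let $B$ be a nonempty finite set and $M\subseteq\omega^B$ an upper set. Then the function $x\mapsto\nu_x(M)$ on $\mathbb{R}_{\ge0}$ is: identically $0$ if $M$ is empty; identically $1$ if $M=\omega^B$; and otherwise strictly increasing and continuous, with $\nu_0(M)=0$ and $\lim_{x\to\infty}\nu_x(M)=1$.
   Context: $\omega$ denotes the set of nonnegative integers and $\omega^B$ the set of functions $B\to\omega$, ordered pointwise. $M\subseteq\omega^B$ is an upper set if $f\in M$ and $f\le g$ imply $g\in M$. The geometric distribution on $\omega$ with parameter $0<p\le1$ assigns probability $p(1-p)^k$ to $k$ (with $0^0=1$). For $T\in\mathbb{R}_{\ge0}$, $\nu_T$ is the probability measure on $\omega^B$ which is the product of $\#B$ copies of the geometric distribution with parameter $(1+T/\#B)^{-1}$. *)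

From HB Require Import structures.
From mathcomp Require Import all_boot.
From Stdlib Require Import Reals ClassicalEpsilon.



Unset Printing Implicit Defensive.

Local Open Scope R_scope.

(* geometric distribution with parameter p: k |-> p (1-p)^k  (0^0 = 1) *)
Definition geom (p : R) (k : nat) : R := p * (1 - p) ^ k.

Definition nu_param (B : finType) (T : R) : R := / (1 + T / INR #|B|).

Definition nu_weight (B : finType) (T : R) (f : B -> nat) : R :=
  \big[Rmult/1]_(b : B) geom (nu_param B T) (f b).

Definition indic (B : finType) (M : (B -> nat) -> Prop) (f : B -> nat) : R :=
  if excluded_middle_informative (M f) then 1 else 0.

Definition nu_partial (B : finType) (T : R) (M : (B -> nat) -> Prop) (N : nat) : R :=
  \big[Rplus/0]_(g : {ffun B -> 'I_N})
     (indic B M (fun b => nat_of_ord (g b)) * nu_weight B T (fun b => nat_of_ord (g b))).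

(* nu_T(M) = sum_{f in M} nu_T({f}) (countable sum of nonnegative terms),
   i.e. the limit of the partial sums over the exhausting boxes {0..N-1}^B. *)
Definition nu (B : finType) (T : R) (M : (B -> nat) -> Prop) : R :=
  epsilon (inhabits 0) (fun v => Un_cv (nu_partial B T M) v).

Definition upper_set (B : finType) (M : (B -> nat) -> Prop) : Prop :=
  forall f g : B -> nat, (forall b, leq (f b) (g b)) -> M f -> M g.

(* Write n = #|B|, p_T = n/(n+T) and q = 1 - p.  By definition nu_T(M) is the
   limit of the box sums S_N, the weight of M inside {0..N-1}^B for the product
   of geometric laws; these sums increase and are at most 1 (nu_cv).

   Along a coordinate b0, the other coordinates being
      frozen, M is an up-set of omega, i.e. a half-line {k >= j}, whose
      truncated geometric mass is q^j - q^N (mass_upset).  Lowering the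
      parameter of b0 from a to a' therefore changes S_N by at least -q'^N, by
      at most (a - a')/a', and by a definite positive amount on any fiber whose
      threshold j lies in [1, m] (coord_diff_lb, coord_diff_ub,
      coord_diff_strict): the weights of the frozen coordinates form a
      sub-probability, so these one-dimensional bounds survive averaging.
   2. Sweep.  Changing the parameters one coordinate at a time compares S_N for
      the constant parameters p_x and p_y (sweep_lb, sweep_ub); if 0 is not in
      M and f is, the sweep along the coordinates of f gains a definite amount
      d > 0 at the step where it enters M (sweep_strict).
   3. Limits.  Letting N -> oo gives 0 < nu_y(M) - nu_x(M) <= y - x for x < y
      (nu_lipschitz, nu_strict), hence strict monotonicity and continuity.  The
      translate f + omega^B of a point f of M gives nu_T(M) >= q^(n max f),
      whence nu = 1 for M = omega^B and nu_T(M) -> 1 (nu_lb, nu_full,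
      nu_tends_to_1); at T = 0 all mass sits at the origin (nu_at0). *)

From HB Require Import structures.
From mathcomp Require Import all_boot.
From Stdlib Require Import Reals Lra ClassicalEpsilon FunctionalExtensionality.

Set Implicit Arguments.
Unset Strict Implicit.

Local Open Scope R_scope.

Lemma Rplus_assoc_law : associative Rplus.
Proof. by move=> x y z; rewrite Rplus_assoc. Qed.

Lemma Rmult_assoc_law : associative Rmult.
Proof. by move=> x y z; rewrite Rmult_assoc. Qed.

HB.instance Definition _ := Monoid.isComLaw.Build R 0 Rplus Rplus_assoc_law Rplus_comm Rplus_0_l.
HB.instance Definition _ := Monoid.isComLaw.Build R 1 Rmult Rmult_assoc_law Rmult_comm Rmult_1_l.
HB.instance Definition _ := Monoid.isMulLaw.Build R 0 Rmult Rmult_0_l Rmult_0_r.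
HB.instance Definition _ :=
  Monoid.isAddLaw.Build R Rmult Rplus Rmult_plus_distr_r Rmult_plus_distr_l.

Lemma pow_le1 x n : 0 <= x <= 1 -> x ^ n <= 1.
Proof. by move=> Hx; rewrite -(pow1 n); apply: pow_incr. Qed.

Lemma pow_antimono q m j : 0 <= q <= 1 -> (j <= m)%nat -> q ^ m <= q ^ j.
Proof.
move=> Hq Hjm; rewrite -(subnK Hjm) pow_add -[X in _ <= X]Rmult_1_l.
apply: Rmult_le_compat_r; first by apply: pow_le; lra.
exact: pow_le1.
Qed.

Lemma bernoulli x y n : 0 <= y <= x -> x <= 1 -> x ^ n - INR n * y <= (x - y) ^ n.
Proof.
move=> Hxy Hx; elim: n => [|n IH]; first by rewrite /=; lra.
rewrite S_INR /=.
have Hxn : 0 <= x ^ n <= 1 by split; [apply: pow_le|apply: pow_le1]; lra.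
have Hn : 0 <= INR n by apply: pos_INR.
have : (x ^ n - INR n * y) * (x - y) <= (x - y) ^ n * (x - y)
  by apply: Rmult_le_compat_r; lra.
have : 0 <= INR n * y * (1 - x) by apply: Rmult_le_pos; nra.
nra.
Qed.

Lemma pow_incr_ub x y j : 0 <= x <= y -> y <= 1 -> (y ^ j - x ^ j) * (1 - y) <= y - x.
Proof.
move=> Hxy Hy; elim: j => [|j IH] /=; first lra.
have Hxj : 0 <= x ^ j <= 1 by split; [apply: pow_le|apply: pow_le1]; lra.
have -> : (y * y ^ j - x * x ^ j) * (1 - y) =
          y * ((y ^ j - x ^ j) * (1 - y)) + x ^ j * (y - x) * (1 - y) by ring.
have : y * ((y ^ j - x ^ j) * (1 - y)) <= y * (y - x) by apply: Rmult_le_compat_l; lra.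
have : 0 <= (1 - x ^ j) * (y - x) * (1 - y)
  by apply: Rmult_le_pos; [apply: Rmult_le_pos|]; lra.
nra.
Qed.

Lemma pow_incr_lb x y i : 0 <= x <= y -> (y - x) * y ^ i <= y ^ i.+1 - x ^ i.+1.
Proof.
move=> Hxy; elim: i => [|i IH] /=; first lra.
have -> : y * (y * y ^ i) - x * (x * x ^ i) =
          y * (y ^ i.+1 - x ^ i.+1) + x ^ i.+1 * (y - x) by rewrite /=; ring.
have : y * ((y - x) * y ^ i) <= y * (y ^ i.+1 - x ^ i.+1) by apply: Rmult_le_compat_l; lra.
have : 0 <= x ^ i.+1 * (y - x) by apply: Rmult_le_pos; [apply: pow_le|]; lra.
rewrite /=; nra.
Qed.

Lemma geom_ge0 a k : 0 <= a <= 1 -> 0 <= geom a k.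
Proof. by move=> Ha; apply: Rmult_le_pos; [lra|apply: pow_le; lra]. Qed.

Lemma geom_tail a j N : (j <= N)%nat ->
  \big[Rplus/0]_(k < N) (if (j <= k)%nat then geom a k else 0) = (1 - a) ^ j - (1 - a) ^ N.
Proof.
elim: N => [|N IH]; first by rewrite leqn0 => /eqP ->; rewrite big_ord0 /=; ring.
rewrite leq_eqVlt => /orP [/eqP ->|HjN].
  by rewrite big1 ?Rminus_diag // => k _; rewrite leqNgt ltn_ord.
rewrite ltnS in HjN.
by rewrite big_ord_recr /= IH // HjN /geom /=; ring.
Qed.

Lemma geom_sum a N : \big[Rplus/0]_(k < N) geom a k = 1 - (1 - a) ^ N.
Proof. by rewrite -(@geom_tail a 0 N (leq0n N)) /=. Qed.

Lemma geom_sum_bounds a N : 0 <= a <= 1 -> 0 <= \big[Rplus/0]_(k < N) geom a k <= 1.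
Proof.
move=> Ha; rewrite geom_sum.
have := @pow_le1 (1 - a) N; have := pow_le (1 - a) N; lra.
Qed.

Section FiniteSums.
Variable I : finType.

Lemma sum_ge0 (P : pred I) (F : I -> R) : (forall i, P i -> 0 <= F i) ->
  0 <= \big[Rplus/0]_(i | P i) F i.
Proof. by move=> H; apply: (big_ind (fun x => 0 <= x)) => //; [lra|move=> x y; lra]. Qed.

Lemma sum_le (P : pred I) (F G : I -> R) : (forall i, P i -> F i <= G i) ->
  \big[Rplus/0]_(i | P i) F i <= \big[Rplus/0]_(i | P i) G i.
Proof. by move=> H; apply: (big_ind2 (fun x y => x <= y)) => //; [lra|move=> *; lra]. Qed.

Lemma sum_ge_term (P : pred I) (F : I -> R) i0 : P i0 -> (forall i, P i -> 0 <= F i) ->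
  F i0 <= \big[Rplus/0]_(i | P i) F i.
Proof.
move=> Pi0 H; rewrite (bigD1 i0) //=.
have : 0 <= \big[Rplus/0]_(i | P i && (i != i0)) F i by apply: sum_ge0 => i /andP [/H].
lra.
Qed.

Lemma sum_sub (P : pred I) (F G : I -> R) :
  \big[Rplus/0]_(i | P i) F i - \big[Rplus/0]_(i | P i) G i =
  \big[Rplus/0]_(i | P i) (F i - G i).
Proof.
rewrite /Rminus (big_morph Ropp (id1 := 0) (op1 := Rplus)) ?big_split //; [|ring].
by move=> x y; ring.
Qed.

Lemma wsum_shift (P : pred I) (w v : I -> R) L : L <= 0 -> (forall i, P i -> 0 <= w i) ->
  \big[Rplus/0]_(i | P i) w i <= 1 ->
  \big[Rplus/0]_(i | P i) (w i * (v i - L)) + L <= \big[Rplus/0]_(i | P i) (w i * v i).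
Proof.
move=> HL Hw Hs.
have -> : \big[Rplus/0]_(i | P i) (w i * v i) =
          \big[Rplus/0]_(i | P i) (w i * (v i - L)) + L * \big[Rplus/0]_(i | P i) w i.
  rewrite big_distrr -big_split /=; apply: eq_bigr => i _; ring.
have : 0 <= \big[Rplus/0]_(i | P i) w i by exact: sum_ge0.
nra.
Qed.

Lemma wsum_lb (P : pred I) (w v : I -> R) L : L <= 0 -> (forall i, P i -> 0 <= w i) ->
  \big[Rplus/0]_(i | P i) w i <= 1 -> (forall i, P i -> L <= v i) ->
  L <= \big[Rplus/0]_(i | P i) (w i * v i).
Proof.
move=> HL Hw Hs Hv; have := wsum_shift v HL Hw Hs.
have : 0 <= \big[Rplus/0]_(i | P i) (w i * (v i - L)).
  by apply: sum_ge0 => i Pi; apply: Rmult_le_pos; [apply: Hw|have := Hv i Pi; lra].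
lra.
Qed.

Lemma wsum_lb_at (P : pred I) (w v : I -> R) L i0 : P i0 -> L <= 0 ->
  (forall i, P i -> 0 <= w i) -> \big[Rplus/0]_(i | P i) w i <= 1 ->
  (forall i, P i -> L <= v i) ->
  w i0 * (v i0 - L) + L <= \big[Rplus/0]_(i | P i) (w i * v i).
Proof.
move=> Pi0 HL Hw Hs Hv; have := wsum_shift v HL Hw Hs.
have := @sum_ge_term P (fun i => w i * (v i - L)) i0 Pi0.
have Hterm : forall i, P i -> 0 <= w i * (v i - L).
  by move=> i Pi; apply: Rmult_le_pos; [apply: Hw|have := Hv i Pi; lra].
move=> /(_ Hterm); lra.
Qed.

Lemma wsum_ub (P : pred I) (w v : I -> R) U : 0 <= U -> (forall i, P i -> 0 <= w i) ->
  \big[Rplus/0]_(i | P i) w i <= 1 -> (forall i, P i -> v i <= U) ->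
  \big[Rplus/0]_(i | P i) (w i * v i) <= U.
Proof.
move=> HU Hw Hs Hv.
apply: (Rle_trans _ (U * \big[Rplus/0]_(i | P i) w i)); last nra.
rewrite big_distrr; apply: sum_le => i Pi.
by rewrite Rmult_comm; apply: Rmult_le_compat_r; [apply: Hw|apply: Hv].
Qed.

End FiniteSums.

Section FiniteProducts.
Variable B : finType.

Lemma prod_mono (F G : B -> R) : (forall b, 0 <= F b <= G b) ->
  \big[Rmult/1]_b F b <= \big[Rmult/1]_b G b.
Proof.
move=> H; suff : 0 <= \big[Rmult/1]_b F b <= \big[Rmult/1]_b G b by case.
apply: (big_ind2 (fun x y => 0 <= x <= y)) => [|x1 x2 y1 y2 Hx Hy|b _]; last exact: H.
  lra.
by split; [apply: Rmult_le_pos|apply: Rmult_le_compat]; lra.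
Qed.

Lemma prod_const c : \big[Rmult/1]_(b : B) c = c ^ #|B|.
Proof. by rewrite big_const cardE; elim: (size _) => //= k ->. Qed.

End FiniteProducts.

Lemma cv_const c : Un_cv (fun _ => c) c.
Proof. by move=> e He; exists 0%nat => n _; rewrite /R_dist Rminus_diag Rabs_R0. Qed.

Lemma cv_pow0 q : 0 <= q < 1 -> Un_cv (fun N => q ^ N) 0.
Proof.
move=> Hq e He; have [N HN] := pow_lt_1_zero q (ltac:(rewrite Rabs_right; lra)) e He.
by exists N => n Hn; rewrite /R_dist Rminus_0_r; apply: HN.
Qed.

Lemma cv_le_eventually u w l1 l2 N0 : Un_cv u l1 -> Un_cv w l2 ->
  (forall N, (N0 <= N)%nat -> u N <= w N) -> l1 <= l2.
Proof.
move=> Hu Hw H.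
have Hshift : forall n, u (n + N0)%nat <= w (n + N0)%nat by move=> n; apply: H; rewrite leq_addl.
exact: (Rle_cv_lim Hshift (CV_shift' _ _ _ Hu) (CV_shift' _ _ _ Hw)).
Qed.

Lemma lim_lb w L d C q N0 : 0 <= q < 1 -> Un_cv w L ->
  (forall N, (N0 <= N)%nat -> d - C * q ^ N <= w N) -> d <= L.
Proof.
move=> Hq Hw; apply: cv_le_eventually Hw.
have := CV_minus _ _ _ _ (cv_const d) (CV_mult _ _ _ _ (cv_const C) (cv_pow0 Hq)).
by rewrite Rmult_0_r Rminus_0_r.
Qed.

Lemma lim_ub w L C N0 : Un_cv w L -> (forall N, (N0 <= N)%nat -> w N <= C) -> L <= C.
Proof. by move=> Hw; apply: cv_le_eventually Hw (cv_const C). Qed.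

Lemma nu_eq (B : finType) T M l : Un_cv (nu_partial B T M) l -> nu B T M = l.
Proof.
move=> Hl.
have Hnu := epsilon_spec (inhabits 0) (fun v => Un_cv (nu_partial B T M) v) (ex_intro _ l Hl).
exact: UL_sequence Hnu Hl.
Qed.

Definition ind (P : Prop) : R := if excluded_middle_informative P then 1 else 0.

Lemma ind_bounds P : 0 <= ind P <= 1.
Proof. by rewrite /ind; case: excluded_middle_informative => ? /=; lra. Qed.

Definition mass (c : nat -> Prop) (a : R) (N : nat) : R :=
  \big[Rplus/0]_(k < N) (ind (c k) * geom a k).

Section UpSetOfNat.
Variable c : nat -> Prop.
Hypothesis c_up : forall k, c k -> c k.+1.

Lemma upset_ge j N : (j <= N)%nat -> c j -> c N.
Proof.
elim: N => [|N IH]; first by rewrite leqn0 => /eqP ->.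
by rewrite leq_eqVlt => /orP [/eqP -> //|/IH Hc /Hc /c_up].
Qed.

(* An up-set of the integers is a half-line {k | j <= k}; its truncated mass
   is (1-a)^j - (1-a)^N, with j = N if c has no element below N. *)
Lemma mass_upset N : exists j, (j <= N)%nat /\ (forall k, (k < j)%nat -> ~ c k) /\
  ((j < N)%nat -> c j) /\ forall a, mass c a N = (1 - a) ^ j - (1 - a) ^ N.
Proof.
elim: N => [|N [j [HjN [Hbelow [Hj Hmass]]]]].
  by exists 0%nat; do 3!split => //; move=> a; rewrite /mass big_ord0 /=; ring.
have HN : forall a, mass c a N.+1 = mass c a N + ind (c N) * geom a N
  by move=> a; rewrite /mass big_ord_recr.
have [ltjN|geNj] := ltnP j N.
-
  have cN : c N := @upset_ge j N (ltnW ltjN) (Hj ltjN).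
  exists j; split; first exact: leqW.
  split => //; split => [_|a]; first exact: Hj ltjN.
  rewrite HN Hmass /ind.
  by case: excluded_middle_informative => // ?; rewrite /geom /=; ring.
- have eqjN : j = N by apply/eqP; rewrite eqn_leq HjN geNj.
  rewrite {}eqjN in Hbelow Hmass *.
  case: (classic (c N)) => cN.
  + exists N; do 3!split => //; move=> a; rewrite HN Hmass /ind.
    by case: excluded_middle_informative => // ?; rewrite /geom /=; ring.
  + exists N.+1; split => //; split.
      by move=> k; rewrite ltnS leq_eqVlt => /orP [/eqP -> //|/Hbelow].
    split => [|a]; first by rewrite ltnn.
    by rewrite HN Hmass /ind; case: excluded_middle_informative => // ? /=; ring.
Qed.

Variables (a a' : R) (N : nat).
Hypothesis Ha : 0 <= a' <= a.
Hypothesis Ha1 : a <= 1.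

Lemma mass_diff_lb : - (1 - a') ^ N <= mass c a' N - mass c a N.
Proof.
have [j [_ [_ [_ Hm]]]] := mass_upset N; rewrite !Hm.
have := pow_incr (1 - a) (1 - a') j (ltac:(lra)).
have := pow_incr (1 - a) (1 - a') N (ltac:(lra)).
have : 0 <= (1 - a) ^ N by apply: pow_le; lra.
lra.
Qed.

Lemma mass_diff_ub : (mass c a' N - mass c a N) * a' <= a - a'.
Proof.
have [j [_ [_ [_ Hm]]]] := mass_upset N; rewrite !Hm.
have := @pow_incr_ub (1 - a) (1 - a') j (ltac:(lra)) (ltac:(lra)).
have := pow_incr (1 - a) (1 - a') N (ltac:(lra)).
nra.
Qed.

Lemma mass_diff_strict m : ~ c 0%nat -> c m -> (m < N)%nat ->
  (a - a') * (1 - a') ^ m - (1 - a') ^ N <= mass c a' N - mass c a N.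
Proof.
move=> c0 cm ltmN.
have [j [_ [Hbelow [Hj Hm]]]] := mass_upset N; rewrite !Hm.
have lejm : (j <= m)%nat by rewrite leqNgt; apply/negP => /Hbelow.
case: j lejm {Hm Hbelow} Hj => [_ /(_ (leq_ltn_trans (leq0n m) ltmN))//|i leim _].
have := @pow_incr_lb (1 - a) (1 - a') i (ltac:(lra)).
have : (1 - a') ^ m <= (1 - a') ^ i by apply: pow_antimono; [lra|exact: ltnW].
have := pow_incr (1 - a) (1 - a') N (ltac:(lra)).
have : 0 <= (1 - a) ^ N by apply: pow_le; lra.
have : 0 <= a - a' by lra.
nra.
Qed.

End UpSetOfNat.

Section Boxes.
Variables (B : finType) (M : (B -> nat) -> Prop).

Definition box_pt {N} (g : {ffun B -> 'I_N}) : B -> nat := fun b => g b.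

Definition unit_params (r : B -> R) : Prop := forall b, 0 <= r b <= 1.

Definition weight (r : B -> R) (f : B -> nat) : R :=
  \big[Rmult/1]_b geom (r b) (f b).

Definition box_sum (N : nat) (r : B -> R) : R :=
  \big[Rplus/0]_(g : {ffun B -> 'I_N}) (ind (M (box_pt g)) * weight r (box_pt g)).

Lemma nu_partial_box T N : nu_partial B T M N = box_sum N (fun _ => nu_param B T).
Proof. by []. Qed.

Lemma weight_ge0 r f : unit_params r -> 0 <= weight r f.
Proof.
move=> Hr; apply: (big_ind (fun x => 0 <= x)) => [|x y|b _]; first lra.
  exact: Rmult_le_pos.
exact: geom_ge0.
Qed.

(* The box carries total weight prod_b (1 - (1 - r b)^N) <= 1. *)
Lemma box_sum_bounds N r : unit_params r -> 0 <= box_sum N r <= 1.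
Proof.
move=> Hr; have Hw := fun f => @weight_ge0 r f Hr.
have Htotal : \big[Rplus/0]_(g : {ffun B -> 'I_N}) weight r (box_pt g) <= 1.
  rewrite -(bigA_distr_bigA (fun b (k : 'I_N) => geom (r b) k)).
  apply: (Rle_trans _ (\big[Rmult/1]_(b : B) 1)); last by rewrite big1_eq; lra.
  by apply: prod_mono => b; apply: geom_sum_bounds.
split; first by apply: sum_ge0 => g _; apply: Rmult_le_pos; [exact: (proj1 (ind_bounds _))|].
apply: Rle_trans Htotal; apply: sum_le => g _.
have := ind_bounds (M (box_pt g)); have := Hw (box_pt g); nra.
Qed.

Lemma box_widen N (G : (B -> nat) -> R) : (forall f, 0 <= G f) ->
  \big[Rplus/0]_(g : {ffun B -> 'I_N}) G (box_pt g) <=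
  \big[Rplus/0]_(g : {ffun B -> 'I_N.+1}) G (box_pt g).
Proof.
move=> HG.
pose widen (g : {ffun B -> 'I_N}) : {ffun B -> 'I_N.+1} :=
  [ffun b => widen_ord (leqnSn N) (g b)].
have widen_inj : {in [set: {ffun B -> 'I_N}] &, injective widen}.
  move=> g1 g2 _ _ /ffunP E; apply/ffunP => b; apply: val_inj.
  by have := congr1 val (E b); rewrite !ffunE.
set image := [set widen g | g in [set: {ffun B -> 'I_N}]].
have -> : \big[Rplus/0]_(g : {ffun B -> 'I_N}) G (box_pt g) =
          \big[Rplus/0]_(g in image) G (box_pt g).
  rewrite big_imset //=; apply: eq_big => [g|g _]; first by rewrite in_setT.
  by congr G; apply: functional_extensionality => b; rewrite /box_pt ffunE.
rewrite [X in _ <= X](bigID (mem image)) /=.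
rewrite -[X in X <= _]Rplus_0_r; apply: Rplus_le_compat; last exact: sum_ge0.
by right; apply: eq_bigl.
Qed.

Lemma box_sum_growing r : unit_params r -> Un_growing (fun N => box_sum N r).
Proof.
move=> Hr N; apply: (@box_widen N (fun f => ind (M f) * weight r f)) => f.
by apply: Rmult_le_pos; [exact: (proj1 (ind_bounds _))|apply: weight_ge0].
Qed.

(* Decomposition of the box sum along one coordinate b0: points are grouped
   by their values off b0; on each such fiber M is an up-set of omega. *)

Definition setc (f : B -> nat) (b0 : B) (k : nat) : B -> nat :=
  fun b => if b == b0 then k else f b.

Definition fsetc {N} (g : {ffun B -> 'I_N}) (b0 : B) (k : 'I_N) : {ffun B -> 'I_N} :=
  [ffun b => if b == b0 then k else g b].

Definition weight_off (r : B -> R) (b0 : B) (f : B -> nat) : R :=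
  \big[Rmult/1]_b (if b == b0 then 1 else geom (r b) (f b)).

Lemma weight_split r f b0 : weight r f = geom (r b0) (f b0) * weight_off r b0 f.
Proof.
rewrite /weight /weight_off (bigD1 b0) // [in RHS](bigD1 b0) //= eqxx Rmult_1_l.
by congr (_ * _); apply: eq_bigr => b /negbTE ->.
Qed.

Lemma weight_off_setc r b0 f k : weight_off r b0 (setc f b0 k) = weight_off r b0 f.
Proof. by apply: eq_bigr => b _; rewrite /setc; case: (b == b0). Qed.

Lemma weight_off_ext r r' b0 f : (forall b, b != b0 -> r b = r' b) ->
  weight_off r b0 f = weight_off r' b0 f.
Proof. by move=> H; apply: eq_bigr => b _; case: ifPn => // /H ->. Qed.

Lemma weight_off_ge0 r b0 f : unit_params r -> 0 <= weight_off r b0 f.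
Proof.
move=> Hr; apply: (big_ind (fun x => 0 <= x)) => [|x y|b _]; first lra.
  exact: Rmult_le_pos.
by case: (b == b0); [lra|apply: geom_ge0].
Qed.

Lemma weight_off_total N r b0 : unit_params r ->
  \big[Rplus/0]_(g : {ffun B -> 'I_N.+1} | g b0 == ord0) weight_off r b0 (box_pt g) <= 1.
Proof.
move=> Hr.
pose G b (k : 'I_N.+1) := if b == b0 then (if k == ord0 then 1 else 0) else geom (r b) k.
have -> : \big[Rplus/0]_(g : {ffun B -> 'I_N.+1} | g b0 == ord0) weight_off r b0 (box_pt g) =
          \big[Rmult/1]_b \big[Rplus/0]_(k < N.+1) G b k.
  rewrite bigA_distr_bigA big_mkcond; apply: eq_bigr => g _.
  case: ifPn => Hg.
    by apply: eq_bigr => b _; rewrite /G; case: eqP => [->|//]; rewrite Hg.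
  by rewrite (bigD1 b0) //= /G eqxx (negbTE Hg) Rmult_0_l.
apply: (Rle_trans _ (\big[Rmult/1]_(b : B) 1)); last by rewrite big1_eq; lra.
apply: prod_mono => b; rewrite /G; case: eqP => _.
  by rewrite big_ord_recl big1 // eqxx; lra.
exact: geom_sum_bounds.
Qed.

Lemma box_pt_fsetc N (g : {ffun B -> 'I_N}) b0 k :
  box_pt (fsetc g b0 k) = setc (box_pt g) b0 k.
Proof.
apply: functional_extensionality => b.
by rewrite /box_pt /fsetc /setc ffunE; case: (b == b0).
Qed.

Lemma sum_by_coord N b0 (G : {ffun B -> 'I_N.+1} -> R) :
  \big[Rplus/0]_(g : {ffun B -> 'I_N.+1}) G g =
  \big[Rplus/0]_(g : {ffun B -> 'I_N.+1} | g b0 == ord0)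
     \big[Rplus/0]_(k < N.+1) G (fsetc g b0 k).
Proof.
rewrite (partition_big (fun g => fsetc g b0 ord0) (fun g => g b0 == ord0)) /=; last first.
  by move=> g _; rewrite ffunE eqxx.
apply: eq_bigr => g /eqP Hg.
rewrite (reindex_onto (fun k => fsetc g b0 k) (fun g' => g' b0)) /=; last first.
  move=> g' /eqP Hg'; apply/ffunP => b; rewrite ffunE.
  by case: eqP => [->//|/eqP Hb]; rewrite -Hg' ffunE (negbTE Hb).
apply: eq_bigl => k; rewrite ffunE eqxx eqxx andbT.
by apply/eqP/ffunP => b; rewrite !ffunE; case: eqP => [->|].
Qed.

Definition fiber (f : B -> nat) (b0 : B) : nat -> Prop := fun k => M (setc f b0 k).

Lemma fiber_upset : upper_set B M -> forall f b0 k, fiber f b0 k -> fiber f b0 k.+1.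
Proof. by move=> HM f b0 k; apply: HM => b; rewrite /setc; case: (b == b0). Qed.

Lemma box_sum_by_coord N r b0 :
  box_sum N.+1 r = \big[Rplus/0]_(g : {ffun B -> 'I_N.+1} | g b0 == ord0)
     (weight_off r b0 (box_pt g) * mass (fiber (box_pt g) b0) (r b0) N.+1).
Proof.
rewrite /box_sum (@sum_by_coord N b0); apply: eq_bigr => g _.
rewrite /mass big_distrr; apply: eq_bigr => k _ /=.
rewrite box_pt_fsetc (weight_split _ _ b0) weight_off_setc /fiber /setc eqxx; ring.
Qed.

(* Changing the parameter of a single coordinate b0 from a to a' <= a, the
   other parameters being unchanged: each fiber along b0 is an up-set, so the
   one-dimensional estimates average out with the sub-probability weights off b0. *)
Section OneCoordinate.
Hypothesis HM : upper_set B M.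
Variables (r r' : B -> R) (b0 : B) (a a' : R) (N : nat).
Hypothesis Hr : unit_params r.
Hypothesis Hrr' : forall b, b != b0 -> r b = r' b.
Hypothesis Hrb0 : r b0 = a.
Hypothesis Hr'b0 : r' b0 = a'.
Hypothesis Ha : 0 <= a' <= a.
Hypothesis Ha1 : a <= 1.

Let w (g : {ffun B -> 'I_N.+1}) := weight_off r b0 (box_pt g).
Let v (g : {ffun B -> 'I_N.+1}) :=
  mass (fiber (box_pt g) b0) a' N.+1 - mass (fiber (box_pt g) b0) a N.+1.

Let w_ge0 : forall g : {ffun B -> 'I_N.+1}, g b0 == ord0 -> 0 <= w g.
Proof. by move=> g _; apply: weight_off_ge0. Qed.

Let w_total : \big[Rplus/0]_(g : {ffun B -> 'I_N.+1} | g b0 == ord0) w g <= 1.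
Proof. exact: weight_off_total. Qed.

Let v_lb (g : {ffun B -> 'I_N.+1}) : g b0 == ord0 -> - (1 - a') ^ N.+1 <= v g.
Proof. by move=> _; have := mass_diff_lb (@fiber_upset HM (box_pt g) b0) N.+1 Ha Ha1. Qed.

Let err_le0 : - (1 - a') ^ N.+1 <= 0.
Proof. by have := pow_le (1 - a') N.+1; lra. Qed.

Lemma coord_diff :
  box_sum N.+1 r' - box_sum N.+1 r =
  \big[Rplus/0]_(g : {ffun B -> 'I_N.+1} | g b0 == ord0) (w g * v g).
Proof.
rewrite !(box_sum_by_coord N _ b0) Hrb0 Hr'b0 sum_sub; apply: eq_bigr => g _.
by rewrite /w /v (@weight_off_ext r' r) => [|b /Hrr' ->]; [ring|].
Qed.

Lemma coord_diff_lb : - (1 - a') ^ N.+1 <= box_sum N.+1 r' - box_sum N.+1 r.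
Proof. by rewrite coord_diff; apply: wsum_lb err_le0 w_ge0 w_total v_lb. Qed.

Lemma coord_diff_ub : (box_sum N.+1 r' - box_sum N.+1 r) * a' <= a - a'.
Proof.
rewrite coord_diff big_distrl /=.
under eq_bigr => g _ do rewrite Rmult_assoc.
apply: wsum_ub w_ge0 w_total _ => [|g _]; first lra.
by have := mass_diff_ub (@fiber_upset HM (box_pt g) b0) N.+1 Ha Ha1.
Qed.

Lemma coord_diff_strict (g0 : {ffun B -> 'I_N.+1}) m : g0 b0 = ord0 ->
  ~ fiber (box_pt g0) b0 0 -> fiber (box_pt g0) b0 m -> (m < N.+1)%nat ->
  w g0 * ((a - a') * (1 - a') ^ m) - (1 - a') ^ N.+1 <= box_sum N.+1 r' - box_sum N.+1 r.
Proof.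
move=> Hg0 out0 inm ltmN.
have Hg0' : g0 b0 == ord0 by rewrite Hg0.
have := @wsum_lb_at _ (fun g : {ffun B -> 'I_N.+1} => g b0 == ord0) w v _ g0 Hg0'
  err_le0 w_ge0 w_total v_lb.
have := mass_diff_strict (@fiber_upset HM (box_pt g0) b0) Ha Ha1 out0 inm ltmN.
have := @weight_off_ge0 r b0 (box_pt g0) Hr; rewrite -/(w g0) -/(v g0) -coord_diff.
nra.
Qed.

End OneCoordinate.

(* Summing the one-coordinate estimates along s compares the
   box sums for the constant parameters a and a'. *)
Section Sweep.
Hypothesis HM : upper_set B M.
Variables (a a' : R).
Hypothesis Ha : 0 <= a' <= a.
Hypothesis Ha1 : a <= 1.

Definition mixed (s : seq B) : B -> R := fun b => if b \in s then a' else a.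

Lemma mixed_unit s : unit_params (mixed s).
Proof. by move=> b; rewrite /mixed; case: (b \in s); lra. Qed.

Lemma mixed_cons b s b' : b' != b -> mixed s b' = mixed (b :: s) b'.
Proof. by move=> Hb'; rewrite /mixed in_cons (negbTE Hb'). Qed.

Lemma mixed_new b s : b \notin s -> mixed s b = a.
Proof. by rewrite /mixed => /negbTE ->. Qed.

Lemma mixed_head b s : mixed (b :: s) b = a'.
Proof. by rewrite /mixed mem_head. Qed.

Lemma mixed_none : mixed [::] = fun _ => a.
Proof. by []. Qed.

Lemma mixed_all : mixed (enum B) = fun _ => a'.
Proof. by apply: functional_extensionality => b; rewrite /mixed mem_enum. Qed.

Lemma sweep_lb N s : uniq s ->
  - INR (size s) * (1 - a') ^ N.+1 <= box_sum N.+1 (mixed s) - box_sum N.+1 (mixed [::]).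
Proof.
elim: s => [|b s IH]; first by rewrite /= Rminus_diag; lra.
rewrite cons_uniq => /andP [bs /IH {}IH]; rewrite [size _]/= S_INR.
have := coord_diff_lb HM N (mixed_unit s) (mixed_cons s) (mixed_new bs) (mixed_head b s) Ha Ha1.
set k := INR (size s) in IH *; lra.
Qed.

Lemma sweep_ub N s : uniq s ->
  (box_sum N.+1 (mixed s) - box_sum N.+1 (mixed [::])) * a' <= INR (size s) * (a - a').
Proof.
elim: s => [|b s IH]; first by rewrite /= Rminus_diag; lra.
rewrite cons_uniq => /andP [bs /IH {}IH]; rewrite [size _]/= S_INR.
have := coord_diff_ub HM N (mixed_unit s) (mixed_cons s) (mixed_new bs) (mixed_head b s) Ha Ha1.
set k := INR (size s) in IH *; lra.
Qed.

Definition restrict (f : B -> nat) (s : seq B) : B -> nat :=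
  fun b => if b \in s then f b else 0%nat.

Lemma restrict_all f : restrict f (enum B) = f.
Proof. by apply: functional_extensionality => b; rewrite /restrict mem_enum. Qed.

Lemma weight_off_pos r b0 f :
  (forall b, b != b0 -> 0 < r b /\ (f b != 0%nat -> r b < 1)) -> 0 < weight_off r b0 f.
Proof.
move=> Hr; apply: (big_ind (fun x => 0 < x)) => [|x y|b _]; first lra.
  exact: Rmult_lt_0_compat.
case: eqP => [_|/eqP /Hr [r_pos r_lt1]]; first lra.
apply: Rmult_lt_0_compat => //; case: (f b) r_lt1 => [|k /(_ isT) ?]; first by rewrite /=; lra.
by apply: pow_lt; lra.
Qed.

Lemma sweep_strict f : ~ M (fun _ => 0%nat) -> 0 < a' < a -> forall s, uniq s ->
  M (restrict f s) -> exists2 d, 0 < d & forall N, (forall b, (f b < N.+1)%nat) ->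
    d - INR (size s) * (1 - a') ^ N.+1 <= box_sum N.+1 (mixed s) - box_sum N.+1 (mixed [::]).
Proof.
move=> M0 Ha'; elim=> [|b s IH].
  by move=> _ Hf; case: M0; apply: HM Hf => b; rewrite /restrict in_nil.
rewrite cons_uniq [size _]/= => /andP [bs us] Hf.
case: (classic (M (restrict f s))) => Hfs.
  have [d d_pos Hd] := IH us Hfs.
  exists d => // N HN; have := Hd N HN; rewrite S_INR.
  have := coord_diff_lb HM N (mixed_unit s) (mixed_cons s) (mixed_new bs) (mixed_head b s) Ha Ha1.
  by set k := INR (size s); lra.
(* the sweep enters M exactly at the coordinate b *)
have Hfiber0 : setc (restrict f s) b 0 = restrict f s.
  apply: functional_extensionality => b'; rewrite /setc /restrict.
  by case: eqP => // ->; rewrite (negbTE bs).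
have Hfiber : setc (restrict f s) b (f b) = restrict f (b :: s).
  by apply: functional_extensionality => b'; rewrite /setc /restrict in_cons; case: eqP => [->|].
exists (weight_off (mixed s) b (restrict f s) * ((a - a') * (1 - a') ^ f b)).
  apply: Rmult_lt_0_compat; last by apply: Rmult_lt_0_compat; [lra|apply: pow_lt; lra].
  apply: weight_off_pos => b' _; rewrite /mixed /restrict.
  by case: (b' \in s) => /=; split => //; lra.
move=> N HN.
pose g0 : {ffun B -> 'I_N.+1} := [ffun b' => inord (restrict f s b')].
have Hg0 : box_pt g0 = restrict f s.
  apply: functional_extensionality => b'; rewrite /box_pt ffunE inordK //.
  by rewrite /restrict; case: (b' \in s).
have g0b : g0 b = ord0 by apply: val_inj; rewrite ffunE /= inordK /restrict (negbTE bs).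
have out0 : ~ fiber (box_pt g0) b 0 by rewrite /fiber Hg0 Hfiber0.
have in_fb : fiber (box_pt g0) b (f b) by rewrite /fiber Hg0 Hfiber.
have := coord_diff_strict HM (mixed_unit s) (mixed_cons s) (mixed_new bs) (mixed_head b s)
  Ha Ha1 g0b out0 in_fb (HN b).
rewrite Hg0.
have := sweep_lb N us; rewrite S_INR.
by set k := INR (size s); lra.
Qed.

End Sweep.

(* Lower bound for the box sum with constant parameter a: if f is in M and
   bounded by K, then M contains the translate f + omega^B, whose mass in the
   box is at least ((1-a)^K)^#|B| up to the truncation error. *)
Lemma box_sum_lb N a f K : upper_set B M -> M f -> (forall b, (f b <= K)%nat) ->
  (K <= N)%nat -> 0 < a <= 1 ->
  ((1 - a) ^ K) ^ #|B| - INR #|B| * (1 - a) ^ N <= box_sum N (fun _ => a).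
Proof.
move=> HM Mf HfK HKN Ha.
have Hq : 0 <= 1 - a <= 1 by lra.
pose above (b : B) (k : 'I_N) := if (f b <= k)%nat then geom a k else 0.
apply: (Rle_trans _ (\big[Rplus/0]_(g : {ffun B -> 'I_N}) \big[Rmult/1]_b above b (g b))).
  rewrite -bigA_distr_bigA.
  under eq_bigr => b _ do rewrite /above (geom_tail a (leq_trans (HfK b) HKN)).
  apply: (Rle_trans _ (\big[Rmult/1]_(b : B) ((1 - a) ^ K - (1 - a) ^ N))).
    rewrite prod_const; apply: bernoulli; last exact: pow_le1.
    by split; [apply: pow_le; lra|apply: pow_antimono].
  apply: prod_mono => b; have := pow_antimono Hq HKN; have := pow_antimono Hq (HfK b).
  lra.
apply: sum_le => g _.
case: (boolP [forall b, (f b <= g b)%nat]) => [/forallP Hfg|/forallPn [b Hb]].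
  have HMg : M (box_pt g) by apply: HM Mf => b; apply: Hfg.
  rewrite /ind; case: excluded_middle_informative => // _ /=.
  by rewrite Rmult_1_l; right; apply: eq_bigr => b _; rewrite /above Hfg.
rewrite (bigD1 b) //= /above (negbTE Hb) Rmult_0_l.
by apply: Rmult_le_pos; [exact: (proj1 (ind_bounds _))|apply: weight_ge0 => b'; lra].
Qed.

End Boxes.

Lemma lipschitz_limit1_in (g : R -> R) (D : R -> Prop) x : D x ->
  (forall y z, D y -> D z -> Rabs (g y - g z) <= Rabs (y - z)) -> limit1_in g D (g x) x.
Proof.
move=> Dx Hg eps Heps; exists eps; split => // y [Dy Hyx].
by apply: Rle_lt_trans Hyx; apply: Hg.
Qed.

Section NuParam.
Variable B : finType.
Hypothesis HB : (0 < #|B|)%coq_nat.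

Let n_pos : 0 < INR #|B|.
Proof. exact: lt_0_INR. Qed.

Lemma nu_param_eq T : 0 <= T -> nu_param B T * (INR #|B| + T) = INR #|B|.
Proof. by move=> HT; rewrite /nu_param; field; split; lra. Qed.

Lemma nu_param_bounds T : 0 <= T -> 0 < nu_param B T <= 1.
Proof.
move=> HT; have := nu_param_eq HT.
have : 0 < nu_param B T by apply: Rinv_0_lt_compat; apply: Rplus_lt_le_0_compat;
  [lra|apply: Rmult_le_pos; [lra|apply: Rlt_le; apply: Rinv_0_lt_compat]].
nra.
Qed.

Lemma nu_param_0 : nu_param B 0 = 1.
Proof. by rewrite /nu_param /Rdiv Rmult_0_l Rplus_0_r Rinv_1. Qed.

Lemma nu_param_gap x y : 0 <= x -> x < y ->
  nu_param B y < nu_param B x /\ nu_param B y < 1 /\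
  INR #|B| * (nu_param B x - nu_param B y) <= (y - x) * nu_param B y.
Proof.
move=> Hx Hxy.
have Ex := nu_param_eq Hx; have Ey := nu_param_eq (ltac:(lra) : 0 <= y).
have := nu_param_bounds Hx; have := nu_param_bounds (ltac:(lra) : 0 <= y).
set a := nu_param B x in Ex *; set a' := nu_param B y in Ey *.
move=> Ha' Ha.
have lt_a'a : a' < a by nra.
split => //; split; first nra.
(* n (a - a') = a a' (y - x) <= (y - x) a' *)
nra.
Qed.

End NuParam.

Section Nu.
Variables (B : finType) (M : (B -> nat) -> Prop).
Hypothesis HB : (0 < #|B|)%coq_nat.
Hypothesis HM : upper_set B M.

Let unit_const T : 0 <= T -> unit_params (fun _ : B => nu_param B T).
Proof. by move=> HT b; have := nu_param_bounds HB HT; lra. Qed.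

(* nu_T(M) is the limit of the box sums, which increase and are at most 1. *)
Lemma nu_cv T : 0 <= T -> Un_cv (fun N => box_sum M N (fun _ => nu_param B T)) (nu B T M).
Proof.
move=> HT; have Hr := unit_const HT.
have Hbound : has_ub (fun N => box_sum M N (fun _ => nu_param B T)).
  by exists 1 => _ [N ->]; case: (box_sum_bounds M N Hr).
have [l Hl] := growing_cv _ (box_sum_growing M Hr) Hbound.
by rewrite (nu_eq Hl).
Qed.

Lemma nu_le1 T : 0 <= T -> nu B T M <= 1.
Proof.
move=> HT; apply: (lim_ub (N0 := 0%nat) (nu_cv HT)) => N _.
by case: (box_sum_bounds M N (unit_const HT)).
Qed.

Lemma nu_lb f T : M f -> 0 <= T ->
  ((1 - nu_param B T) ^ (\max_(b : B) f b)) ^ #|B| <= nu B T M.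
Proof.
move=> Mf HT; have [p_pos p_le1] := nu_param_bounds HB HT.
apply: (lim_lb (C := INR #|B|) (q := 1 - nu_param B T) (N0 := \max_(b : B) f b)
  (ltac:(lra)) (nu_cv HT)) => N HN.
by apply: box_sum_lb HM Mf _ HN _ => [b|]; [apply: leq_bigmax|lra].
Qed.

Lemma nu_lipschitz x y : 0 <= x -> x < y -> 0 <= nu B y M - nu B x M <= y - x.
Proof.
move=> Hx Hxy; have Hy : 0 <= y by lra.
have [lt_a'a [a'_lt1 gap]] := nu_param_gap HB Hx Hxy.
have [a'_pos _] := nu_param_bounds HB Hy; have [_ a_le1] := nu_param_bounds HB Hx.
have Hcv := CV_minus _ _ _ _ (nu_cv Hy) (nu_cv Hx).
have Ha : 0 <= nu_param B y <= nu_param B x by lra.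
have Hsize : INR (size (enum B)) = INR #|B| by rewrite -cardE.
split.
  apply: (lim_lb (d := 0) (C := INR #|B|) (q := 1 - nu_param B y) (N0 := 1%nat)
    (ltac:(lra)) Hcv) => [[|N]] // _.
  have := sweep_lb HM Ha a_le1 N (enum_uniq B).
  by rewrite mixed_all mixed_none Hsize /=; lra.
suff : nu B y M - nu B x M <= INR #|B| * (nu_param B x - nu_param B y) / nu_param B y.
  move=> H; apply: Rle_trans H _; apply: (Rmult_le_reg_r (nu_param B y)) => //.
  by rewrite /Rdiv Rmult_assoc Rinv_l; lra.
apply: (lim_ub (N0 := 1%nat) Hcv) => [[|N]] // _.
have := sweep_ub HM Ha a_le1 N (enum_uniq B).
rewrite mixed_all mixed_none Hsize => H.
apply: (Rmult_le_reg_r (nu_param B y)) => //.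
by rewrite /Rdiv Rmult_assoc Rinv_l; lra.
Qed.

Lemma nu_dist x y : 0 <= x -> 0 <= y -> Rabs (nu B x M - nu B y M) <= Rabs (x - y).
Proof.
move=> Hx Hy; case: (Rtotal_order x y) => [lt_xy|[->|lt_yx]].
- have H := nu_lipschitz Hx lt_xy.
  by rewrite Rabs_minus_sym [Rabs (x - y)]Rabs_minus_sym !Rabs_right; lra.
- by rewrite !Rminus_diag Rabs_R0; lra.
- have H := nu_lipschitz Hy lt_yx.
  by rewrite !Rabs_right; lra.
Qed.

Lemma nu_strict f x y : ~ M (fun _ => 0%nat) -> M f -> 0 <= x -> x < y ->
  nu B x M < nu B y M.
Proof.
move=> M0 Mf Hx Hxy; have Hy : 0 <= y by lra.
have [lt_a'a [a'_lt1 _]] := nu_param_gap HB Hx Hxy.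
have [a'_pos _] := nu_param_bounds HB Hy; have [_ a_le1] := nu_param_bounds HB Hx.
have Hcv := CV_minus _ _ _ _ (nu_cv Hy) (nu_cv Hx).
have Ha : 0 <= nu_param B y <= nu_param B x by lra.
have Hf : M (restrict f (enum B)) by rewrite restrict_all.
have [d d_pos Hd] := sweep_strict HM Ha a_le1 M0 (ltac:(lra)) (enum_uniq B) Hf.
suff : d <= nu B y M - nu B x M by lra.
apply: (lim_lb (C := INR #|B|) (q := 1 - nu_param B y) (N0 := (\max_(b : B) f b).+1)
  (ltac:(lra)) Hcv) => [[|N]] // HN.
have := Hd N (fun b => leq_ltn_trans (leq_bigmax b) HN).
by rewrite mixed_all mixed_none -cardE.
Qed.

(* At T = 0 all the mass sits at the origin. *)
Lemma nu_at0 : ~ M (fun _ => 0%nat) -> nu B 0 M = 0.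
Proof.
move=> M0; apply: nu_eq; apply: Un_cv_ext (cv_const 0) => N.
rewrite nu_partial_box; symmetry; apply: big1 => g _.
case: (boolP [exists b, (0 < g b)%nat]) => [/existsP [b Hb]|/existsPn Hg].
  rewrite /weight (bigD1 b) //= /geom nu_param_0 Rminus_diag pow_i; last exact/ltP.
  ring.
have -> : box_pt g = fun _ => 0%nat.
  by apply: functional_extensionality => b; move: (Hg b); rewrite lt0n negbK => /eqP.
by rewrite /ind; case: excluded_middle_informative => [/M0 []|? /=]; ring.
Qed.

Lemma nu_empty : (forall f, ~ M f) -> forall T, nu B T M = 0.
Proof.
move=> Mnone T; apply: nu_eq; apply: Un_cv_ext (cv_const 0) => N.
rewrite nu_partial_box; symmetry; apply: big1 => g _.
by rewrite /ind; case: excluded_middle_informative => [/Mnone []|? /=]; ring.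
Qed.

Lemma nu_full : (forall f, M f) -> forall T, 0 <= T -> nu B T M = 1.
Proof.
move=> Mall T HT; apply: Rle_antisym; first exact: nu_le1.
have := nu_lb (Mall (fun _ => 0%nat)) HT.
have -> : \max_(b : B) (fun _ => 0%nat) b = 0%nat by apply/eqP; rewrite -leqn0; apply/bigmax_leqP.
by rewrite /= pow1.
Qed.

(* nu_T(M) -> 1 as T -> oo: with m = #|B| max f, 1 - nu_T(M) <= m p_T < m #|B| / T. *)
Lemma nu_tends_to_1 f : M f ->
  forall eps, 0 < eps -> exists X, forall x, X <= x -> Rabs (nu B x M - 1) < eps.
Proof.
move=> Mf eps Heps; set m := ((\max_(b : B) f b) * #|B|)%coq_nat.
have Hn : 0 < INR #|B| by apply: lt_0_INR.
have Hm : 0 <= INR m * INR #|B| by apply: Rmult_le_pos; apply: pos_INR.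
exists (INR m * INR #|B| / eps + 1) => x Hx.
have Hbound : INR m * INR #|B| < eps * x.
  have : INR m * INR #|B| / eps * eps = INR m * INR #|B| by field; lra.
  have : 0 <= INR m * INR #|B| / eps
    by apply: Rmult_le_pos; [|apply: Rlt_le; apply: Rinv_0_lt_compat].
  nra.
have Hx0 : 0 <= x by nra.
have Hle1 := nu_le1 Hx0; have Hlb := nu_lb Mf Hx0.
have [p_pos p_le1] := nu_param_bounds HB Hx0; have Ep := nu_param_eq HB Hx0.
rewrite -pow_mult -/m in Hlb.
have := @bernoulli 1 (nu_param B x) m (ltac:(lra)) (Rle_refl 1); rewrite pow1.
have : INR m * nu_param B x < eps.
  have : INR m * nu_param B x * (INR #|B| + x) = INR m * INR #|B| by rewrite Rmult_assoc Ep.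
  have : 0 <= INR m by apply: pos_INR.
  nra.
rewrite Rabs_left1; lra.
Qed.

End Nu.

Theorem theorem7 (B : finType) (HB : (0 < #|B|)%coq_nat)
    (M : (B -> nat) -> Prop) (HM : upper_set B M) :
  ((forall f, ~ M f) -> forall x, 0 <= x -> nu B x M = 0) /\
  ((forall f, M f) -> forall x, 0 <= x -> nu B x M = 1) /\
  ((exists f, M f) -> (exists g, ~ M g) ->
     (forall x y, 0 <= x -> x < y -> nu B x M < nu B y M) /\
     (forall x, 0 <= x ->
        limit1_in (fun y => nu B y M) (fun y => 0 <= y) (nu B x M) x) /\
     nu B 0 M = 0 /\
     (forall eps, 0 < eps -> exists X, forall x, X <= x -> Rabs (nu B x M - 1) < eps)).
Proof.
split; first by move=> Mnone x _; apply: nu_empty.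
split; first exact: nu_full.
move=> [f Mf] [g nMg].
(* M is not all of omega^B, so as an upper set it misses the origin *)
have M0 : ~ M (fun _ => 0%nat) by move=> /(HM _ g (fun b => leq0n (g b))).
split; first by move=> x y; apply: nu_strict M0 Mf.
split; first by move=> x Hx; apply: lipschitz_limit1_in => // y z; apply: nu_dist.
split; first exact: nu_at0.
exact: nu_tends_to_1 Mf.
Qed.
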